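(* Let $\mathbb F$ be any field, $n\ge k>1$, and let $\mathcal K\subseteq M_{n\times k}(\mathbb F)$ be a linear variety with $\operatorname{codim}(\mathcal K)=k$ such that $\det_{n,k}(X)=0$ for all $X\in\mathcal K$. Let $B^*\subseteq[n]\times[k]$ be a cobasis of $\mathcal M(\mathcal K)$. If there is $1\le j'\le k$ with $B^*\cap([n]\times\{j'\})=\varnothing$, then $|B^*\cap(\{i\}\times[k])|\le 1$ for all $1\le i\le n$.
   Context: A linear variety is a nonempty set $\mathbf s+V$ with $V$ a linear subspace (uniquely determined); codimension is ambient dimension minus $\dim V$. Identify $M_{n\times k}(\mathbb F)$ with $\mathbb F^{[n]\times[k]}$, $(i,j)$ indexing row $i$, column $j$. Matroid $\mathcal M(\mathcal K)$ of $\mathcal K=\mathbf s+V\subseteq\mathbb F^E$: the matroid on $E$ with rank function $r(S)=\dim\operatorname{span}\{x_e|_V:e\in S\}$, $x_e$ the coordinate functionals. A cobasis is the complement of a basis (maximal independent set). Cullis' determinant: $\det_{n,k}(X)=\sum_{c}\operatorname{sgn}(c)\det(X[c|))$, sum over $k$-subsets $c=\{c(1)<\dots<c(k)\}$ of $[n]$, $X[c|)$ the submatrix of rows in $c$, $\operatorname{sgn}(c)=(-1)^{\sum_\alpha(c(\alpha)-\alpha)}$. *)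

From HB Require Import structures.
From mathcomp Require Import all_boot all_order all_algebra.
Set Implicit Arguments. Unset Strict Implicit. Unset Printing Implicit Defensive.
Import GRing.Theory.
Local Open Scope ring_scope.

(* Cullis' determinant.  A k-subset c = {c(1) < ... < c(k)} of [n] is encoded
   by the strictly increasing map alpha |-> c(alpha) : 'I_k -> 'I_n (0-based). *)
Definition incr_map (n k : nat) (f : {ffun 'I_k -> 'I_n}) : bool :=
  [forall a : 'I_k, forall b : 'I_k, (a < b)%N ==> (f a < f b)%N].

Definition cullis_sgn (F : fieldType) (n k : nat) (f : {ffun 'I_k -> 'I_n}) : F :=
  (-1) ^+ (\sum_(a < k) (f a - a))%N.

Definition cullis_det (F : fieldType) (n k : nat) (X : 'M[F]_(n, k)) : F :=
  \sum_(f : {ffun 'I_k -> 'I_n} | incr_map f)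
     cullis_sgn F f * \det (\matrix_(a < k, j < k) X (f a) j).

(* Matroid M(K) of K = s + V on E = [n] x [k]: S is independent iff the
   restrictions to V of the coordinate functionals x_e (e in S) are
   linearly independent. *)
Definition mx_indep (F : fieldType) (n k : nat) (V : {vspace 'M[F]_(n, k)})
    (S : {set 'I_n * 'I_k}) : Prop :=
  forall c : 'I_n * 'I_k -> F,
    (forall X, X \in V -> \sum_(e in S) c e * X e.1 e.2 = 0) ->
    forall e, e \in S -> c e = 0.

Definition mx_basis (F : fieldType) (n k : nat) (V : {vspace 'M[F]_(n, k)})
    (B : {set 'I_n * 'I_k}) : Prop :=
  mx_indep V B /\ forall T : {set 'I_n * 'I_k}, B \proper T -> ~ mx_indep V T.

Definition mx_cobasis (F : fieldType) (n k : nat) (V : {vspace 'M[F]_(n, k)})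
    (Bs : {set 'I_n * 'I_k}) : Prop :=
  exists B, mx_basis V B /\ Bs = ~: B.

(* Suppose row i carries two cells of the cobasis B*.  A basis has at least
   dim V cells, so B* has at most k cells.  Greedily pair the columns with
   distinct rows, starting with the free column j' paired with row i, so that
   every cell of B* lies in the row of a column paired earlier.  A column
   whose B*-cells all lie in used rows always exists: each new row is chosen
   to cover a still uncovered B*-cell (if any) and row i covers two, so the
   uncovered cells plus the used columns stay fewer than k.  Any matrix
   that has the 0/1 pattern of this pairing off B* is the selection matrix
   times a unitriangular matrix, hence has nonzero Cullis determinant; and
   since coordinates on a basis are free on V, K contains such a matrix. *)

From HB Require Import structures.
From mathcomp Require Import all_boot all_order all_algebra.
From mathcomp Require Import all_fingroup zify.
Set Implicit Arguments. Unset Strict Implicit. Unset Printing Implicit Defensive.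
Import GRing.Theory.
Local Open Scope ring_scope.

Lemma det_weight_unitrig (F : fieldType) (k : nat) (E : 'M[F]_k) (w : 'I_k -> nat) :
  (forall i, E i i = 1) ->
  (forall i j, i != j -> E i j != 0 -> (w i < w j)%N) -> \det E = 1.
Proof.
move=> E1 Ew; rewrite /determinant (bigD1 1%g) //= [X in _ + X]big1 ?addr0.
  by rewrite odd_perm1 expr0 mul1r big1 // => i _; rewrite perm1 E1.
move=> s s1; have [i0 si0] : exists i, s i != i.
  apply/existsP; apply: contraR s1 => /existsPn fixs.
  by apply/eqP/permP => i; rewrite perm1; apply/eqP/negPn/fixs.
(* a displaced index of maximal weight is mapped to an entry that must vanish *)
have [i si imax] := @arg_maxnP _ i0 (fun i => s i != i) w si0.
rewrite (bigD1 i) //= [E i (s i)](_ : _ = 0) ?mul0r ?mulr0 //.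
apply/eqP; apply: contraT => Eis.
have /imax : s (s i) != s i by rewrite (inj_eq perm_inj).
by rewrite /= leqNgt Ew // eq_sym.
Qed.

Section CullisDet.
Variables (F : fieldType) (n k : nat).

Definition select_mx m l (r : 'I_m -> 'I_l) : 'M[F]_(l, m) :=
  \matrix_(p, q) (p == r q)%:R.

Lemma mul_select_mx m (r : 'I_m -> 'I_n) (t : 'I_k -> 'I_m) :
  select_mx r *m select_mx t = select_mx (r \o t).
Proof.
apply/matrixP => p a; rewrite !mxE (bigD1 (t a)) //= big1 ?addr0 => [|q qt].
  by rewrite !mxE eqxx mulr1.
by rewrite !mxE (negbTE qt) mulr0.
Qed.

Lemma cullis_det_mulmx (X : 'M[F]_(n, k)) (E : 'M[F]_k) :
  cullis_det (X *m E) = cullis_det X * \det E.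
Proof.
rewrite /cullis_det mulr_suml; apply: eq_bigr => f _.
rewrite -mulrA -det_mulmx; congr (_ * \det _).
by apply/matrixP => a j; rewrite !mxE; apply: eq_bigr => b _; rewrite !mxE.
Qed.

Lemma cullis_sgn_neq0 (f : {ffun 'I_k -> 'I_n}) : cullis_sgn F f != 0.
Proof. by rewrite /cullis_sgn expf_neq0 // oppr_eq0 oner_eq0. Qed.

Lemma incr_map_inj (f : {ffun 'I_k -> 'I_n}) : incr_map f -> injective f.
Proof.
move=> /'forall_forallP incr a b fab; apply/eqP; apply: contraT => neq_ab.
have [ab | ba | /val_inj eq_ab] := ltngtP a b; last by rewrite eq_ab eqxx in neq_ab.
  by have := implyP (incr a b) ab; rewrite fab ltnn.
by have := implyP (incr b a) ba; rewrite fab ltnn.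
Qed.

Lemma incr_map_sorted (f : {ffun 'I_k -> 'I_n}) :
  incr_map f -> sorted (relpre val ltn) (codom f).
Proof.
move=> /'forall_forallP incr; rewrite codomE sorted_map.
apply: sub_sorted (_ : sorted (relpre val ltn) (enum 'I_k)).
  by move=> a b; apply/implyP/incr.
by rewrite -sorted_map val_enum_ord iota_ltn_sorted.
Qed.

Lemma incr_map_eq (f g : {ffun 'I_k -> 'I_n}) : incr_map f -> incr_map g ->
  {subset codom f <= codom g} -> f = g.
Proof.
move=> incrf incrg sub_fg.
have [_ eq_fg] := uniq_min_size (introT (injectiveP _) (incr_map_inj incrf)) sub_fg
  (eq_leq (etrans (size_codom g) (esym (size_codom f)))).
have lt_trans : transitive (relpre (@nat_of_ord n) ltn) := relpre_trans ltn_trans.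
have := irr_sorted_eq lt_trans (fun a => ltnn a) (incr_map_sorted incrf)
  (incr_map_sorted incrg) eq_fg.
by rewrite !codom_ffun => /val_inj/(can_inj fgraphK).
Qed.

Lemma incr_map_reindex (r : 'I_k -> 'I_n) : injective r ->
  exists t : 'I_k -> 'I_k, incr_map [ffun a => r (t a)].
Proof.
move=> r_inj; set R := r @: [set: 'I_k].
have lt_trans : transitive (relpre (@nat_of_ord n) ltn) := relpre_trans ltn_trans.
have sizeR : size (enum R) = k by rewrite -cardE card_imset // cardsT card_ord.
have sortedR : sorted (relpre val ltn) (enum R).
  have -> : enum R = filter (mem R) (enum 'I_n) by rewrite enumT.
  apply: sorted_filter => //.
  by rewrite -sorted_map val_enum_ord iota_ltn_sorted.
pose t a := odflt a [pick q | r q == nth (r a) (enum R) a].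
have rtE a : r (t a) = nth (r a) (enum R) a.
  rewrite /t; case: pickP => [q /eqP // | none].
  have : nth (r a) (enum R) a \in R by rewrite -mem_enum mem_nth ?sizeR.
  by case/imsetP => q _ /esym/eqP; rewrite none.
exists t; apply/'forall_forallP => a b; apply/implyP => ab; rewrite !ffunE !rtE.
rewrite (set_nth_default (r a) (r b)) ?sizeR //.
by apply: (sorted_ltn_nth lt_trans (r a) sortedR); rewrite ?inE ?sizeR.
Qed.

Lemma cullis_det_select_incr (f : {ffun 'I_k -> 'I_n}) : incr_map f ->
  cullis_det (select_mx f) = cullis_sgn F f.
Proof.
move=> incrf; rewrite /cullis_det (bigD1 f) //= big1 ?addr0 => [|g /andP[incrg gf]].
  have -> : \matrix_(a, j) select_mx f (f a) j = 1%:M.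
    by apply/matrixP => a j; rewrite !mxE (inj_eq (incr_map_inj incrf)).
  by rewrite det1 mulr1.
have [a g_a] : exists a, g a \notin codom f.
  apply/existsP; apply: contraR gf => /existsPn sub.
  by apply/eqP/incr_map_eq => // _ /codomP[a ->]; apply/negPn/sub.
rewrite (expand_det_row _ a) big1 ?mulr0 // => j _.
rewrite !mxE (_ : (g a == f j) = false) ?mul0r //.
by apply: contraNF g_a => /eqP->; apply: codom_f.
Qed.

Lemma cullis_det_select_neq0 (r : 'I_k -> 'I_n) : injective r ->
  cullis_det (select_mx r) != 0.
Proof.
move=> /incr_map_reindex[t incr_rt]; have := cullis_sgn_neq0 [ffun a => r (t a)].
rewrite -cullis_det_select_incr // (_ : select_mx _ = select_mx r *m select_mx t).
  by rewrite cullis_det_mulmx; apply: contraNneq => ->; rewrite mul0r.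
by rewrite mul_select_mx; apply/matrixP => p q; rewrite !mxE ffunE.
Qed.

Lemma select_mx_mul_rows (r : 'I_k -> 'I_n) (Y : 'M[F]_(n, k)) : injective r ->
  (forall p q, p \notin codom r -> Y p q = 0) ->
  Y = select_mx r *m \matrix_(q', q) Y (r q') q.
Proof.
move=> r_inj Y0; apply/matrixP => p q; rewrite !mxE.
have [/codomP[q0 ->] | p_r] := boolP (p \in codom r).
  rewrite (bigD1 q0) //= big1 ?addr0 => [|q' q'q0]; first by rewrite !mxE eqxx mul1r.
  by rewrite !mxE (inj_eq r_inj) eq_sym (negbTE q'q0) mul0r.
rewrite Y0 // big1 // => q' _; rewrite !mxE (_ : (p == r q') = false) ?mul0r //.
by apply: contraNF p_r => /eqP->; apply: codom_f.
Qed.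
End CullisDet.

Section Selection.
Variables (n k : nat) (P : {set 'I_n * 'I_k}).

Definition triangular_selection (r : 'I_k -> 'I_n) (w : 'I_k -> nat) : Prop :=
  injective r /\ forall p q, (p, q) \in P -> exists2 q', r q' = p & (w q' < w q)%N.

Definition uncovered (R : {set 'I_n}) : {set 'I_n * 'I_k} :=
  [set e in P | e.1 \notin R].

Definition partial_selection (U : {set 'I_k}) (r : 'I_k -> 'I_n) (w : 'I_k -> nat) :=
  [/\ {in U &, injective r}, {in U, forall q, w q < #|U|}%N,
      (forall p q, q \in U -> (p, q) \in P ->
         exists2 q', q' \in U & r q' = p /\ (w q' < w q)%N)
    & (#|U| < k)%N -> (#|uncovered (r @: U)| + #|U| < k)%N].

Lemma uncoveredS (R R' : {set 'I_n}) : R \subset R' -> uncovered R' \subset uncovered R.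
Proof.
move=> sRR'; apply/subsetP => e; rewrite !inE => /andP[-> eR'].
by apply: contra eR'; apply: subsetP.
Qed.

Lemma partial_selection_start i j' : (#|P| <= k)%N ->
  (forall e, e \in P -> e.2 != j') -> (1 < #|[set e in P | e.1 == i]|)%N ->
  partial_selection [set j'] (fun=> i) (fun=> 0%N).
Proof.
move=> Pk Pj' Pi; rewrite /partial_selection cards1 imset_set1.
split=> [x y /set1P-> /set1P-> // | // | p q /set1P-> /Pj'/eqP // | _].
have : #|[set e in P | e.1 == i]| + #|uncovered [set i]| = #|P|.
  rewrite -(cardsID [set e | e.1 == i] P); congr (_ + _); apply: eq_card => e.
    by rewrite !inE.
  by rewrite !inE andbC.
lia.
Qed.

Lemma exists_free_column (S : {set 'I_n * 'I_k}) (U : {set 'I_k}) :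
  (#|S| + #|U| < k)%N -> exists2 q, q \notin U & forall e, e \in S -> e.2 != q.
Proof.
move=> SUk; set C := [set e.2 | e in S].
have /subsetPn[q _] : ~~ ([set: 'I_k] \subset C :|: U).
  apply: contraL SUk => /subset_leq_card; rewrite cardsT card_ord -leqNgt => kCU.
  apply: leq_trans kCU (leq_trans (leq_card_setU _ _) _).
  by rewrite leq_add2r leq_imset_card.
rewrite inE negb_or => /andP[qC qU]; exists q => // e eS.
by apply: contraNneq qC => <-; apply: imset_f.
Qed.

Lemma exists_fresh_row (R : {set 'I_n}) : (#|R| < n)%N ->
  exists2 p, p \notin R & (#|uncovered (p |: R)| <= #|uncovered R|.-1)%N.
Proof.
move=> Rn; have [S0 | [e eS]] := set_0Vmem (uncovered R).
  have /subsetPn[p _ pR] : ~~ ([set: 'I_n] \subset R).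
    by apply: contraL Rn => /subset_leq_card; rewrite cardsT card_ord -leqNgt.
  exists p => //; rewrite S0 cards0 leqn0 cards_eq0 -subset0 -S0.
  by apply: uncoveredS; apply: subsetUr.
have eR : e.1 \notin R by move: eS; rewrite inE => /andP[].
exists e.1 => //; rewrite -ltnS prednK ?card_gt0; last by apply/set0Pn; exists e.
apply: proper_card; rewrite properEneq uncoveredS ?subsetUr // andbT.
by apply: contraTneq eS => <-; rewrite !inE eqxx andbF.
Qed.

Lemma partial_selection_extend (U : {set 'I_k}) r w : (k <= n)%N -> (#|U| < k)%N ->
  partial_selection U r w ->
  exists (U' : {set 'I_k}) r' w', #|U'| = #|U|.+1 /\ partial_selection U' r' w'.
Proof.
move=> kn Uk [r_inj wU rP cover].
have [q qU q_free] := exists_free_column (cover Uk).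
have [p0 p0R shrink] : exists2 p0, p0 \notin r @: U &
    (#|uncovered (p0 |: r @: U)| <= #|uncovered (r @: U)|.-1)%N.
  apply: exists_fresh_row.
  by apply: leq_ltn_trans (leq_imset_card _ _) (leq_trans Uk kn).
pose r' x := if x == q then p0 else r x; pose w' x := if x == q then #|U| else w x.
have U_neq_q x : x \in U -> x != q by apply: contraTneq => ->.
have r'E : {in U, r' =1 r} by move=> x /U_neq_q xq; rewrite /r' ifN.
have w'E : {in U, w' =1 w} by move=> x /U_neq_q xq; rewrite /w' ifN.
have r'q : r' q = p0 by rewrite /r' eqxx.
have w'q : w' q = #|U| by rewrite /w' eqxx.
have cardU' : #|q |: U| = #|U|.+1 by rewrite cardsU1 qU.
exists (q |: U), r', w'; split=> //; split; rewrite ?cardU'.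
- move=> x y /setU1P[-> | xU] /setU1P[-> | yU] //; rewrite ?r'q ?r'E //.
  + by move=> p0r; rewrite p0r imset_f in p0R.
  + by move=> rp0; rewrite -rp0 imset_f in p0R.
  + exact: r_inj.
- move=> x /setU1P[-> | xU]; first by rewrite w'q.
  by rewrite w'E //; apply/ltnW/wU.
- move=> p x /setU1P[-> | xU] Px; last first.
    have [x' x'U [<- lt]] := rP p x xU Px.
    by exists x'; rewrite ?setU1r // r'E // !w'E.
  have /imsetP[x' x'U ->] : p \in r @: U.
    by apply: contraT => pR; have := q_free (p, q); rewrite inE Px pR eqxx => /(_ isT).
  by exists x'; rewrite ?setU1r // r'E // w'E // w'q; split=> //; apply: wU.
- rewrite imsetU1 (eq_in_imset r'E) r'q => U'k.
  move: shrink (cover Uk) U'k; set a := #|uncovered (p0 |: _)|.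
  by set b := #|uncovered _|; lia.
Qed.

Lemma exists_triangular_selection (i : 'I_n) (j' : 'I_k) : (k <= n)%N ->
  (#|P| <= k)%N -> (forall e, e \in P -> e.2 != j') ->
  (1 < #|[set e in P | e.1 == i]|)%N ->
  exists r w, triangular_selection r w.
Proof.
move=> kn Pk Pj' Pi.
have grow m : (m < k)%N ->
    exists (U : {set 'I_k}) r w, #|U| = m.+1 /\ partial_selection U r w.
  elim: m => [_ | m IH mk].
    exists [set j'], (fun=> i), (fun=> 0%N); rewrite cards1.
    by split=> //; apply: partial_selection_start.
  have [U [r [w [Um sel]]]] := IH (ltnW mk).
  by rewrite -Um; apply: (partial_selection_extend kn _ sel); rewrite Um.
have k_gt0 : (0 < k)%N := leq_ltn_trans (leq0n j') (ltn_ord j').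
have := grow k.-1; rewrite ltn_predL prednK //.
move=> /(_ k_gt0)[U [r [w [Uk [r_inj _ rP _]]]]].
have UT : U = [set: 'I_k].
  by apply/eqP; rewrite eqEcard subsetT cardsT card_ord Uk leqnn.
move: r_inj rP; rewrite UT => r_inj rP.
exists r, w; split=> [x y | p q /(rP p q (in_setT q))[q' _ []]]; first by apply: r_inj.
by exists q'.
Qed.

End Selection.

Lemma cullis_det_completion_neq0 (F : fieldType) (n k : nat)
    (P : {set 'I_n * 'I_k}) (r : 'I_k -> 'I_n) (w : 'I_k -> nat) (Y : 'M[F]_(n, k)) :
  triangular_selection P r w ->
  (forall p q, (p, q) \notin P -> Y p q = select_mx F r p q) -> cullis_det Y != 0.
Proof.
move=> [r_inj rP] YP.
have Y_off p q : (p, q) \notin P -> Y p q = (p == r q)%:R by move/YP->; rewrite mxE.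
have diag_off q : (r q, q) \notin P.
  by apply/negP => /rP[q' /r_inj->]; rewrite ltnn.
rewrite (select_mx_mul_rows r_inj (Y := Y)) => [|p q p_r].
  rewrite cullis_det_mulmx (det_weight_unitrig (w := w)) ?mulr1.
  - exact: cullis_det_select_neq0.
  - by move=> q; rewrite mxE Y_off ?eqxx.
  move=> q' q q'q; rewrite mxE.
  have [/rP[q'' /r_inj<-] // | q'P] := boolP ((r q', q) \in P).
  by rewrite Y_off // (inj_eq r_inj) (negbTE q'q) eqxx.
rewrite Y_off; last by apply: contra p_r => /rP[q' <- _]; apply: codom_f.
by rewrite (_ : (p == r q) = false) //; apply: contraNF p_r => /eqP->; apply: codom_f.
Qed.

Section MatroidBasis.
Variables (F : fieldType) (n k : nat) (V : {vspace 'M[F]_(n, k)})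
  (B : {set 'I_n * 'I_k}).
Hypothesis B_basis : mx_basis V B.

Local Notation d := (\dim V).

Definition vbasis_comb (z : 'rV[F]_d) : 'M[F]_(n, k) :=
  \sum_(t < d) z 0 t *: (vbasis V)`_t.

Lemma vbasis_comb_mem z : vbasis_comb z \in V.
Proof.
apply: memv_suml => t _; apply/memvZ/vbasis_mem.
by apply: mem_nth; rewrite size_tuple.
Qed.

Lemma vbasis_comb_eq0 z : vbasis_comb z = 0 -> z = 0.
Proof.
move=> z0; apply/rowP => t; rewrite mxE.
exact: (freeP (basis_free (vbasisP V)) (fun t => z 0 t) z0).
Qed.

Lemma mx_basis_vanish X : X \in V -> (forall e, e \in B -> X e.1 e.2 = 0) -> X = 0.
Proof.
case: B_basis => B_indep B_max XV XB0; apply/matrixP => p q; rewrite mxE.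
have [pqB | pqB] := boolP ((p, q) \in B); first exact: XB0 (p, q) pqB.
apply/eqP/negPn/negP => Xpq.
apply: (B_max ((p, q) |: B)); first by rewrite properUr // sub1set.
move=> c c_ann.
have c_pq : c (p, q) = 0.
  have := c_ann X XV; rewrite big_setU1 //= big1 ?addr0 => [|e eB]; last first.
    by rewrite XB0 // mulr0.
  by move/eqP; rewrite mulf_eq0 (negbTE Xpq) orbF => /eqP.
have cB : {in B, forall e, c e = 0}.
  by apply: B_indep => Y YV; have := c_ann Y YV; rewrite big_setU1 //= c_pq mul0r add0r.
by move=> e /setU1P[-> | /cB].
Qed.

Definition restr_mx : 'M[F]_(#|B|, d) :=
  \matrix_(p, t) (vbasis V)`_t (enum_val p).1 (enum_val p).2.

Lemma mul_restr_mx_tr z p :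
  (z *m restr_mx^T) 0 p = vbasis_comb z (enum_val p).1 (enum_val p).2.
Proof. by rewrite mxE summxE; apply: eq_bigr => t _; rewrite !mxE. Qed.

Lemma dimv_le_card_basis : (d <= #|B|)%N.
Proof.
suff /eqP <- : row_free restr_mx^T by apply: rank_leq_col.
rewrite -kermx_eq0; apply/eqP/row_matrixP => t; rewrite row0.
have ker0 : row t (kermx restr_mx^T) *m restr_mx^T = 0.
  by rewrite -row_mul mulmx_ker row0.
apply/vbasis_comb_eq0/mx_basis_vanish; first exact: vbasis_comb_mem.
by move=> e eB; rewrite -(enum_rankK_in eB eB) -mul_restr_mx_tr ker0 mxE.
Qed.

Lemma restr_mx_row_free : row_free restr_mx.
Proof.
rewrite -kermx_eq0; apply/eqP/row_matrixP => p0; rewrite row0.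
set v := row p0 _.
have v0 : v *m restr_mx = 0 by rewrite /v -row_mul mulmx_ker row0.
pose c e := \sum_(p | enum_val p == e) v 0 p.
have cE p : c (enum_val p) = v 0 p.
  rewrite /c (eq_bigl (pred1 p)) ?big_pred1_eq // => p'.
  by rewrite /= (inj_eq enum_val_inj).
have c_ann X : X \in V -> \sum_(e in B) c e * X e.1 e.2 = 0.
  move=> XV; rewrite (big_enum_val (fun e => c e * X e.1 e.2)) (coord_vbasis XV) /=.
  under eq_bigr => p _ do rewrite cE summxE mulr_sumr.
  rewrite exchange_big /= big1 // => t _.
  have := congr1 (fun u : 'rV[F]_d => u 0 t) v0; rewrite !mxE => v0t.
  transitivity (coord (vbasis V) t X * \sum_p v 0 p * restr_mx p t).
    by rewrite mulr_sumr; apply: eq_bigr => p _; rewrite !mxE mulrCA.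
  by rewrite v0t mulr0.
case: B_basis => B_indep _.
apply/rowP => p; rewrite [RHS]mxE -cE; apply: (B_indep c c_ann); exact: enum_valP.
Qed.

Lemma mx_basis_interpolate (Y : 'M[F]_(n, k)) :
  exists2 X, X \in V & forall e, e \in B -> X e.1 e.2 = Y e.1 e.2.
Proof.
have full : row_full restr_mx^T.
  by rewrite /row_full mxrank_tr; apply: restr_mx_row_free.
pose y : 'rV[F]_#|B| := \row_p Y (enum_val p).1 (enum_val p).2.
have /submxP[z yz] : (y <= restr_mx^T)%MS by apply: submx_full.
exists (vbasis_comb z); first exact: vbasis_comb_mem.
by move=> e eB; rewrite -(enum_rankK_in eB eB) -mul_restr_mx_tr -yz mxE.
Qed.

End MatroidBasis.

Unset Implicit Arguments.

Theorem mainTheorem4 (F : fieldType) (n k : nat) (hk : (1 < k)%N) (hnk : (k <= n)%N)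
  (s : 'M[F]_(n, k)) (V : {vspace 'M[F]_(n, k)})
  (hcodim : (n * k - \dim V)%N = k)
  (hdet : forall X : 'M[F]_(n, k), X - s \in V -> cullis_det X = 0)
  (Bs : {set 'I_n * 'I_k}) (hB : mx_cobasis V Bs) :
  (exists j' : 'I_k, forall e, e \in Bs -> e.2 != j') ->
  forall i : 'I_n, (#|[set e in Bs | e.1 == i]| <= 1)%N.
Proof.
move=> [j' Bs_j'] i; rewrite leqNgt; apply/negP => Bs_i.
case: hB Bs_j' Bs_i => B [B_basis ->] Bs_j' Bs_i.
have card_Bs : (#|~: B| <= k)%N.
  have := dimv_le_card_basis B_basis; have := cardsC B.
  by rewrite card_prod !card_ord; lia.
have [r [w sel]] := exists_triangular_selection hnk card_Bs Bs_j' Bs_i.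
have [X XV XB] := mx_basis_interpolate B_basis (select_mx F r - s).
have := hdet (X + s); rewrite addrK => /(_ XV)/eqP.
apply/negP/(cullis_det_completion_neq0 sel) => p q; rewrite inE negbK => pqB.
by rewrite mxE (XB (p, q)) // !mxE subrK.
Qed.
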